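(* For all $r\ge3$, $$\sum_{N>0}\dim_{\mathbb Q}\ker\big(E^{(2)}_{N,r}\cdots E^{(r-1)}_{N,r}\big)\,x^N=\mathbb O(x)\sum_{N>0}\dim_{\mathbb Q}\ker C_{N,r-1}\,x^N.$$
   Context: For integers $N,r\ge1$ let $S_{N,r}=\{(n_1,\dots,n_r)\in\mathbb Z^r:\ n_1+\dots+n_r=N,\ \text{each } n_i\ge3 \text{ odd}\}$; when used as an index set it is ordered lexicographically decreasingly. For $m=(m_1,\dots,m_r)$ and $n=(n_1,\dots,n_r)$ let $\delta\binom{m}{n}=1$ if $m_i=n_i$ for all $i$, and $0$ otherwise. Ihara action: for $f\in\mathbb Q[t]$ and a polynomial $g$ in $r-1$ variables, $(f\mathbin{\underline\circ}g)(x_1,\dots,x_r)=f(x_1)g(x_2,\dots,x_r)+\sum_{i=1}^{r-1}\big(f(x_{i+1}-x_i)g(x_1,\dots,\widehat{x_{i+1}},\dots,x_r)-(-1)^{\deg f}f(x_i-x_{i+1})g(x_1,\dots,\widehat{x_i},\dots,x_r)\big)$ (hats denote omitted variables). For positive integers $m_i,n_i$, $e\binom{m_1,\dots,m_r}{n_1,\dots,n_r}$ is the coefficient of $x_1^{n_1-1}\cdots x_r^{n_r-1}$ in $t^{m_1-1}\mathbin{\underline\circ}\,(y_1^{m_2-1}\cdots y_{r-1}^{m_r-1})$. $E_{N,r}$ is the $S_{N,r}\times S_{N,r}$ matrix with $(m,n)$-entry $e\binom{m}{n}$. For $2\le j\le r$, $E^{(j)}_{N,r}$ is the $S_{N,r}\times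 S_{N,r}$ matrix with $(m,n)$-entry $\delta\binom{m_1,\dots,m_{r-j}}{n_1,\dots,n_{r-j}}\,e\binom{m_{r-j+1},\dots,m_r}{n_{r-j+1},\dots,n_r}$ (so $E^{(r)}_{N,r}=E_{N,r}$). $C_{N,r}=E^{(2)}_{N,r}E^{(3)}_{N,r}\cdots E^{(r-1)}_{N,r}E_{N,r}$ (so $C_{N,2}=E_{N,2}$). For a matrix $A$, $\ker A$ denotes its right kernel. $\mathbb O(x)=\frac{x^3}{1-x^2}$. *)

From HB Require Import structures.
From mathcomp Require Import all_boot all_order all_algebra.
Set Implicit Arguments. Unset Strict Implicit. Unset Printing Implicit Defensive.
Import Order.TTheory GRing.Theory Num.Theory.
Local Open Scope ring_scope.

(* A polynomial is a finite list of terms (c, e): c * x_1^{e_1} ... x_k^{e_k}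
   (variables are 0-indexed in the exponent sequence; missing trailing
   exponents are 0).  Polynomials are compared through their coefficients. *)
Definition mpoly := seq (rat * seq nat).

Fixpoint addexp (s t : seq nat) : seq nat :=
  match s, t with
  | [::], _ => t
  | _, [::] => s
  | a :: s', b :: t' => (a + b)%N :: addexp s' t'
  end.

Definition mzero : mpoly := [::].
Definition mone : mpoly := [:: (1, [::])].
Definition madd (p q : mpoly) : mpoly := p ++ q.
Definition mscale (c : rat) (p : mpoly) : mpoly := [seq (c * t.1, t.2) | t <- p].
Definition msub (p q : mpoly) : mpoly := madd p (mscale (-1) q).
Definition mmul (p q : mpoly) : mpoly :=
  [seq (a.1 * b.1, addexp a.2 b.2) | a <- p, b <- q].
Definition mpow (p : mpoly) (k : nat) : mpoly := iter k (mmul p) mone.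

(* the variable x_{i+1} (0-indexed: index i) *)
Definition mX (i : nat) : mpoly := [:: (1, rcons (nseq i 0%N) 1%N)].

Definition expeq (s t : seq nat) : bool :=
  all (fun i => nth 0%N s i == nth 0%N t i) (iota 0 (maxn (size s) (size t))).

Definition mcoef (p : mpoly) (e : seq nat) : rat :=
  \sum_(t <- p | expeq t.2 e) t.1.

Definition mevalm (g : mpoly) (vs : seq mpoly) : mpoly :=
  flatten [seq mscale t.1
             (foldr mmul mone
                [seq mpow (nth mzero vs j) (nth 0%N t.2 j) | j <- iota 0 (size t.2)])
          | t <- g].

Definition pevalm (f : {poly rat}) (L : mpoly) : mpoly :=
  flatten [seq mscale f`_k (mpow L k) | k <- iota 0 (size f)].

Definition rmnth (T : Type) (i : nat) (s : seq T) : seq T := take i s ++ drop i.+1 s.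

(* Ihara action f o g, result a polynomial in r variables x_1..x_r
   (0-indexed 0..r-1), g a polynomial in r-1 variables.
   (f o g)(x) = f(x_1) g(x_2..x_r)
     + sum_{i=1}^{r-1} ( f(x_{i+1}-x_i) g(x_1,..,^x_{i+1},..,x_r)
                         - (-1)^{deg f} f(x_i-x_{i+1}) g(x_1,..,^x_i,..,x_r) ) *)
Definition ihara (r : nat) (f : {poly rat}) (g : mpoly) : mpoly :=
  let xs := [seq mX k | k <- iota 0 r] in
  madd (mmul (pevalm f (mX 0)) (mevalm g (behead xs)))
    (flatten [seq madd
                 (mmul (pevalm f (msub (mX k.+1) (mX k))) (mevalm g (rmnth k.+1 xs)))
                 (mscale (- (-1) ^+ (size f).-1)
                    (mmul (pevalm f (msub (mX k) (mX k.+1))) (mevalm g (rmnth k xs))))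
             | k <- iota 0 r.-1]).

(* e(m_1..m_r ; n_1..n_r): coefficient of x_1^{n_1-1}...x_r^{n_r-1} in
   t^{m_1-1} o (y_1^{m_2-1} ... y_{r-1}^{m_r-1}) *)
Definition ecoef (m n : seq nat) : rat :=
  mcoef (ihara (size m) (('X^((head 0%N m).-1) : {poly rat}))
                [:: (1, [seq k.-1 | k <- behead m])])
        [seq k.-1 | k <- n].

Fixpoint Sseq (N r : nat) : seq (seq nat) :=
  match r with
  | 0 => if N == 0%N then [:: [::]] else [::]
  | r'.+1 =>
      flatten [seq [seq a :: s | s <- Sseq (N - a) r']
              | a <- rev (iota 0 N.+1) & (3 <= a)%N && odd a]
  end.

Definition Smat (N r : nat) (F : seq nat -> seq nat -> rat) : 'M[rat]_(size (Sseq N r)) :=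
  \matrix_(i, j) F (nth [::] (Sseq N r) i) (nth [::] (Sseq N r) j).

Definition Ej (j N r : nat) : 'M[rat]_(size (Sseq N r)) :=
  Smat N r (fun m n => ((take (r - j) m == take (r - j) n)%:R : rat)
                       * ecoef (drop (r - j) m) (drop (r - j) n)).

Definition Emat (N r : nat) : 'M[rat]_(size (Sseq N r)) := Smat N r ecoef.

(* E^{(2)}_{N,r} E^{(3)}_{N,r} ... E^{(k+1)}_{N,r}  (empty product = 1) *)
Definition Eprod (N r k : nat) : 'M[rat]_(size (Sseq N r)) :=
  foldr (fun j A => Ej j N r *m A) 1%:M (iota 2 k).

Definition Cmat (N r : nat) : 'M[rat]_(size (Sseq N r)) :=
  Eprod N r (r - 2) *m Emat N r.

(* dimension of the right kernel {v | A v = 0} *)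
Definition dimker (n : nat) (A : 'M[rat]_n) : nat := \rank (kermx A^T).

Definition posser (a : nat -> nat) (N : nat) : nat := if (0 < N)%N then a N else 0%N.
(* coefficient of x^k in O(x) = x^3/(1-x^2) = sum_{j>=0} x^{3+2j} *)
Definition Ocoef (k : nat) : nat := ((3 <= k)%N && odd k : nat).
Definition sermul (a b : nat -> nat) (N : nat) : nat := (\sum_(k < N.+1) a k * b (N - k))%N.

From HB Require Import structures.
From mathcomp Require Import all_boot all_order all_algebra.
From mathcomp Require Import zify.
Set Implicit Arguments. Unset Strict Implicit. Unset Printing Implicit Defensive.
Import Order.TTheory GRing.Theory Num.Theory.
Local Open Scope ring_scope.

(** For [j < r] the matrix [E^(j)_{N,r}] only links indices with the same
    first entry [n_1 = a], and on the block of indices starting with [a] it is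
    [E^(j)_{N-a,r-1}], where moreover [E^(r-1)_{N-a,r-1} = E_{N-a,r-1}].  Hence
    [E^(2)_{N,r} ... E^(r-1)_{N,r}] is block diagonal with the blocks
    [C_{N-a,r-1}], [a >= 3] odd, and its kernel dimension is the sum of theirs:
    this is the coefficient of [x^N] in [O(x) * sum_N dim ker C_{N,r-1} x^N]. *)

Section SeqIndexedMatrices.

Variable R : nzRingType.
Implicit Types (L : seq (seq nat)) (F G : seq nat -> seq nat -> R).

Definition seqmx L F : 'M[R]_(size L) :=
  \matrix_(i, j) F (nth [::] L i) (nth [::] L j).

Definition kprod L F G x z := \sum_(y <- L) F x y * G y z.

Lemma mul_seqmx L F G : seqmx L F *m seqmx L G = seqmx L (kprod L F G).
Proof.
apply/matrixP => i j; rewrite !mxE /kprod (big_nth [::]) big_mkord.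
by apply: eq_bigr => k _; rewrite !mxE.
Qed.

Lemma eq_seqmx L F G : {in L &, F =2 G} -> seqmx L F = seqmx L G.
Proof. by move=> eqFG; apply/matrixP => i j; rewrite !mxE eqFG ?mem_nth. Qed.

Lemma map_seqmx (f : seq nat -> seq nat) L F :
  seqmx (map f L) F =
  castmx (esym (size_map f L), esym (size_map f L))
    (seqmx L (fun s t => F (f s) (f t))).
Proof.
apply/matrixP => i j; rewrite castmxE !mxE /=.
by rewrite !(nth_map [::]) -?(size_map f L).
Qed.

Lemma foldr_mulmx1 n (M : nat -> 'M[R]_n) js (B : 'M[R]_n) :
  foldr (fun j A => M j *m A) 1%:M js *m B = foldr (fun j A => M j *m A) B js.
Proof. by elim: js => [|j js IH] /=; rewrite ?mul1mx // -mulmxA IH. Qed.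

Definition head_diagonal F := forall x y, head 0%N x != head 0%N y -> F x y = 0.

Definition cons_blocks (A : seq nat) (Ls : nat -> seq (seq nat)) :=
  flatten [seq [seq a :: s | s <- Ls a] | a <- A].

Lemma head_cons_blocks A Ls y : y \in cons_blocks A Ls -> head 0%N y \in A.
Proof.
elim: A => [//|b A IH]; rewrite /cons_blocks /= mem_cat inE.
by case/orP => [/mapP [s _ ->]|/IH ->]; rewrite ?eqxx ?orbT.
Qed.

Lemma head_diagonal_kprod L F G :
  head_diagonal F -> head_diagonal G -> head_diagonal (kprod L F G).
Proof.
move=> hF hG x z hxz; rewrite /kprod big1 // => y _.
have [exy|nxy] := eqVneq (head 0%N x) (head 0%N y).
  by rewrite hG ?mulr0 // -exy.
by rewrite hF ?mul0r.
Qed.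

Lemma kprod_cons_blocks A Ls F G a s t : uniq A -> a \in A -> head_diagonal F ->
  kprod (cons_blocks A Ls) F G (a :: s) (a :: t) =
  kprod (Ls a) (fun s t => F (a :: s) (a :: t)) (fun s t => G (a :: s) (a :: t)) s t.
Proof.
move=> uA aA hF; rewrite /kprod big_flatten /= big_map (bigD1_seq a) //= big_map.
rewrite [X in _ + X]big1 ?addr0 // => b nba; rewrite big_map big1 // => u _.
by rewrite hF ?mul0r //= eq_sym.
Qed.

End SeqIndexedMatrices.

Lemma mxrank_castmx (F : fieldType) m n m' n' (e : (m = m') * (n = n'))
    (A : 'M[F]_(m, n)) :
  \rank (castmx e A) = \rank A.
Proof. by case: e => e1 e2; case: m' / e1; case: n' / e2; rewrite castmx_id. Qed.

Lemma mxrank_seqmx_cat (F : fieldType) L1 L2 (K : seq nat -> seq nat -> F) :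
  {in L1 & L2, forall x y, K x y = 0 /\ K y x = 0} ->
  \rank (seqmx (L1 ++ L2) K) = (\rank (seqmx L1 K) + \rank (seqmx L2 K))%N.
Proof.
move=> K12; have e : (size L1 + size L2 = size (L1 ++ L2))%N by rewrite size_cat.
rewrite -(mxrank_castmx (esym e, esym e)) -rank_diag_block_mx; congr mxrank.
apply/matrixP => i j; rewrite castmxE mxE -(splitK i) -(splitK j).
case: (split i) => i'; case: (split j) => j'.
all: rewrite ?block_mxEul ?block_mxEur ?block_mxEdl ?block_mxEdr !mxE /= !nth_cat.
- by rewrite !ltn_ord.
- rewrite ltn_ord ltnNge leq_addr addKn.
  by case: (K12 _ _ (mem_nth [::] (ltn_ord i')) (mem_nth [::] (ltn_ord j'))).
- rewrite ltn_ord ltnNge leq_addr addKn.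
  by case: (K12 _ _ (mem_nth [::] (ltn_ord j')) (mem_nth [::] (ltn_ord i'))).
- by rewrite !ltnNge !leq_addr !addKn.
Qed.

Lemma dimkerE n (A : 'M[rat]_n) : dimker A = (n - \rank A)%N.
Proof. by rewrite /dimker mxrank_ker mxrank_tr. Qed.

Lemma dimker_seqmx_map f L K :
  dimker (seqmx (map f L) K) = dimker (seqmx L (fun s t => K (f s) (f t))).
Proof. by rewrite !dimkerE map_seqmx mxrank_castmx size_map. Qed.

Lemma dimker_seqmx_cat L1 L2 K :
  {in L1 & L2, forall x y, K x y = 0 /\ K y x = 0} ->
  dimker (seqmx (L1 ++ L2) K) = (dimker (seqmx L1 K) + dimker (seqmx L2 K))%N.
Proof.
move=> K12; rewrite !dimkerE mxrank_seqmx_cat // size_cat.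
by rewrite subnDA -addnBAC ?rank_leq_row // addnBA ?rank_leq_row.
Qed.

Lemma dimker_cons_blocks A Ls K : uniq A -> head_diagonal K ->
  dimker (seqmx (cons_blocks A Ls) K) =
  (\sum_(a <- A) dimker (seqmx (Ls a) (fun s t => K (a :: s) (a :: t))))%N.
Proof.
move=> + hK; elim: A => [|a A IH]; first by rewrite big_nil dimkerE.
case/andP=> aA uA; rewrite big_cons -IH //.
have -> : cons_blocks (a :: A) Ls = [seq a :: s | s <- Ls a] ++ cons_blocks A Ls by [].
rewrite dimker_seqmx_cat ?dimker_seqmx_map // => _ y /mapP [s _ ->] /head_cons_blocks yA.
have nya : head 0%N y != a by apply: contraNneq aA => <-.
by rewrite !hK //= eq_sym.
Qed.

Definition Ekernel (j r : nat) (m n : seq nat) : rat :=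
  ((take (r - j) m == take (r - j) n)%:R : rat) * ecoef (drop (r - j) m) (drop (r - j) n).

Lemma Ej_seqmx j N r : Ej j N r = seqmx (Sseq N r) (Ekernel j r).
Proof. by []. Qed.

Lemma Emat_seqmx N r : Emat N r = seqmx (Sseq N r) (Ekernel r r).
Proof.
by apply: eq_seqmx => m n _ _; rewrite /Ekernel subnn !take0 !drop0 mul1r.
Qed.

Lemma head_diagonal_Ekernel j r : (j < r)%N -> head_diagonal (Ekernel j r).
Proof.
rewrite -subn_gt0 /Ekernel => /prednK <- m n neq_mn.
case: eqP => [eq_mn|_]; last by rewrite mul0r.
by case: m n eq_mn neq_mn => [|? ?] [|? ?] // [->]; rewrite eqxx.
Qed.

Lemma Ekernel_cons j r a s t :
  (j <= r)%N -> Ekernel j r.+1 (a :: s) (a :: t) = Ekernel j r s t.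
Proof. by move=> jr; rewrite /Ekernel subSn //= eqseq_cons eqxx. Qed.

Definition Ekprod L r base (js : seq nat) :=
  foldr (fun j K => kprod L (Ekernel j r) K) base js.

Lemma foldr_Ej_seqmx N r base js :
  foldr (fun j A => Ej j N r *m A) (seqmx (Sseq N r) base) js =
  seqmx (Sseq N r) (Ekprod (Sseq N r) r base js).
Proof. by elim: js => [//|j js IH] /=; rewrite IH -mul_seqmx. Qed.

Lemma Cmat_seqmx N r :
  Cmat N r = seqmx (Sseq N r) (Ekprod (Sseq N r) r (Ekernel r r) (iota 2 (r - 2))).
Proof. by rewrite /Cmat /Eprod foldr_mulmx1 Emat_seqmx foldr_Ej_seqmx. Qed.

Lemma Eprod_seqmx N r : (2 <= r)%N ->
  Eprod N r.+1 (r.+1 - 2) =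
  seqmx (Sseq N r.+1) (Ekprod (Sseq N r.+1) r.+1 (Ekernel r r.+1) (iota 2 (r - 2))).
Proof.
move=> r2; rewrite /Eprod -foldr_Ej_seqmx -Ej_seqmx.
have -> : (r.+1 - 2 = (r - 2) + 1)%N by lia.
by rewrite iotaD foldr_cat /= mulmx1 subnKC.
Qed.

Lemma head_diagonal_Ekprod L r base js : head_diagonal base ->
  all (fun j => j < r)%N js -> head_diagonal (Ekprod L r base js).
Proof.
move=> hbase; elim: js => [//|j js IH] /= /andP [jr /IH hK].
exact: head_diagonal_kprod (head_diagonal_Ekernel jr) hK.
Qed.

Lemma Ekprod_cons_blocks A Ls a r base base' js s t :
    uniq A -> a \in A -> (forall s t, base (a :: s) (a :: t) = base' s t) ->
    all (fun j => j <= r)%N js ->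
  Ekprod (cons_blocks A Ls) r.+1 base js (a :: s) (a :: t) =
  Ekprod (Ls a) r base' js s t.
Proof.
move=> uA aA base_a; elim: js s t => [//|j js IH] s t /= /andP [jr jsr].
rewrite kprod_cons_blocks //; last exact: head_diagonal_Ekernel.
by apply: eq_bigr => y _; rewrite Ekernel_cons // IH.
Qed.

Definition Sheads N := [seq a <- rev (iota 0 N.+1) | (3 <= a)%N && odd a].

Lemma Sseq_cons_blocks N r : Sseq N r.+1 = cons_blocks (Sheads N) (fun a => Sseq (N - a) r).
Proof. by []. Qed.

Lemma dimker_Eprod N r : (2 <= r)%N ->
  dimker (Eprod N r.+1 (r.+1 - 2)) = (\sum_(a <- Sheads N) dimker (Cmat (N - a) r))%N.
Proof.
move=> r2; have jsr : all (fun j => j <= r)%N (iota 2 (r - 2)).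
  by apply/allP => j; rewrite mem_iota; lia.
have uA : uniq (Sheads N) by rewrite filter_uniq // rev_uniq iota_uniq.
rewrite Eprod_seqmx // Sseq_cons_blocks dimker_cons_blocks //; last first.
  by apply: head_diagonal_Ekprod; [exact: head_diagonal_Ekernel | apply: sub_all jsr].
apply: eq_big_seq => a aA; rewrite Cmat_seqmx; congr dimker.
by apply: eq_seqmx => s t _ _; apply: Ekprod_cons_blocks => // ? ?; apply: Ekernel_cons.
Qed.

Lemma big_Sheads N (f : nat -> nat) :
  (\sum_(a <- Sheads N) f a = \sum_(k < N.+1) Ocoef k * f k)%N.
Proof.
rewrite big_filter big_rev big_mkcond -[iota 0 N.+1]/(index_iota 0 N.+1) big_mkord.
by apply: eq_bigr => k _; rewrite /Ocoef; case: ifP; rewrite ?mul1n.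
Qed.

Lemma dimker_Cmat0 r : dimker (Cmat 0 r.+1) = 0%N.
Proof. by rewrite dimkerE. Qed.

Theorem corollary4p3 (r : nat) (hr : (3 <= r)%N) :
  forall N : nat,
    posser (fun M => dimker (Eprod M r (r - 2))) N
    = sermul Ocoef (posser (fun M => dimker (Cmat M (r - 1)))) N.
Proof.
case: r hr => // r hr [|N]; first by rewrite /sermul big_ord1.
rewrite /posser /sermul /= subn1 dimker_Eprod //.
rewrite (big_Sheads _ (fun a => dimker (Cmat (N.+1 - a) r))).
apply: eq_bigr => k _; case: posnP => [->|//].
by case: r hr => // r _; rewrite dimker_Cmat0.
Qed.
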